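(* Let $A_1\le A_2$ and $B_1\le B_2$ be groups with $[A_2:A_1]<\infty$, $[B_2:B_1]<\infty$, $A_1\trianglelefteq B_1$, $A_2\trianglelefteq B_2$, and $A_1=B_1\cap A_2$. Let $\varphi:B_1\to B_2$ be a homomorphism with $\varphi(A_1)\subseteq A_2$. Let $\varphi'=\varphi|_{A_1}:A_1\to A_2$, and let $\bar\varphi:B_1A_2/A_2\to B_2/A_2$, $bA_2\mapsto\varphi(b)A_2$, be the induced map (using $B_1/A_1\cong B_1A_2/A_2$). Then: (1) if $R(\bar\varphi)=\infty$, then $R(\varphi)=\infty$; (2) if $R(\bar\varphi)<\infty$, $|\mathrm{Fix}(\bar\varphi)|<\infty$ and $R(\varphi')=\infty$, then $R(\varphi)=\infty$; (3) if $A_2\le Z(B_2)$, then $R(\varphi)\le R(\bar\varphi)R(\varphi')$ (with the product defined to be $\infty$ if either factor is $\infty$).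
   Context: For a group $K$, a finite-index subgroup $L\le K$ and a homomorphism $\phi:L\to K$, $R(\phi)\in\mathbb Z_{>0}\cup\{\infty\}$ is the number of classes of the relation $\alpha\sim_\phi\beta\iff\exists\gamma\in L:\ \alpha=\gamma\beta\phi(\gamma^{-1})$ on $K$. $\mathrm{Fix}(\bar\varphi)=\{x\in B_1A_2/A_2:\bar\varphi(x)=x\}$. *)

From HB Require Import structures.
From mathcomp Require Import all_boot.
From mathcomp Require Import monoid.
Set Implicit Arguments. Unset Strict Implicit. Unset Printing Implicit Defensive.

Local Open Scope group_scope.

Section Defs.
Variable G : groupType.

Definition is_subgroup (H : G -> Prop) : Prop :=
  [/\ H 1, (forall x y, H x -> H y -> H (x * y)) & (forall x, H x -> H x^-1)].

Definition set_le (H K : G -> Prop) : Prop := forall x, H x -> K x.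

Definition is_normal_in (N K : G -> Prop) : Prop :=
  set_le N K /\ forall k n, K k -> N n -> N (k^-1 * n * k).

Definition finite_index (H K : G -> Prop) : Prop :=
  exists l : seq G, (forall r, r \in l -> K r) /\
    forall x, K x -> exists2 r, r \in l & H (r^-1 * x).

Definition hom_on (H : G -> Prop) (phi : G -> G) : Prop :=
  forall x y, H x -> H y -> phi (x * y) = phi x * phi y.

Definition same_coset (N : G -> Prop) (a b : G) : Prop := N (a^-1 * b).

Definition reid_rel (L : G -> Prop) (phi : G -> G) (a b : G) : Prop :=
  exists2 g, L g & a = g * b * phi g^-1.

(* The Reidemeister relation of the induced map
   bar phi : B1 A2 / A2 -> B2 / A2,  b A2 |-> phi(b) A2,
   lifted to representatives in B2: a A2 ~ b A2 iff there is gamma A2 in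
   B1 A2 / A2 (w.l.o.g. gamma in B1) with a A2 = gamma A2 * b A2 * bar phi(gamma A2)^-1. *)
Definition bar_reid_rel (B1 A2 : G -> Prop) (phi : G -> G) (a b : G) : Prop :=
  exists2 g, B1 g & same_coset A2 a (g * b * (phi g)^-1).

Definition nclasses (S : G -> Prop) (E : G -> G -> Prop) (n : nat) : Prop :=
  exists l : seq G, [/\ size l = n,
    (forall x, x \in l -> S x),
    (forall i j, i < n -> j < n -> E (nth 1 l i) (nth 1 l j) -> i = j) &
    (forall x, S x -> exists2 y, y \in l & E x y)].

Definition infinite_classes (S : G -> Prop) (E : G -> G -> Prop) : Prop :=
  ~ exists n, nclasses S E n.

(* Fix(bar phi) as a set of representatives in B2:
   b A2 with b in B1 and phi(b) A2 = b A2. *)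
Definition fix_bar (B1 A2 : G -> Prop) (phi : G -> G) (b : G) : Prop :=
  B1 b /\ same_coset A2 (phi b) b.

Definition central (x : G) : Prop := forall y, x * y = y * x.

End Defs.

From HB Require Import structures.
From mathcomp Require Import all_boot.
From mathcomp Require Import monoid.
From Stdlib Require Import Classical.
Set Implicit Arguments. Unset Strict Implicit.
Local Open Scope group_scope.

(* The whole argument consists in comparing twisted-conjugacy relations by
   exhibiting finite lists of representatives.  Then:
   (1) two phi-twisted-conjugate elements are also twisted-conjugate modulo A2,
       so R(bar phi) <= R(phi);
   (2) if c is a representative of a phi-class meeting A2 in ac, every element
       of A2 in that class is phi'-twisted-conjugate to some f ac phi(f)^-1
       with f running over representatives of Fix(bar phi); hence finitely
       many phi-classes and a finite Fix(bar phi) give finitely many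
       phi'-classes on A2, which is the contrapositive of (2);
   (3) when A2 is central, the products c a of representatives c of bar phi
       and a of phi' represent all phi-classes. *)

Lemma cover_nclasses {G : groupType} {E : G -> G -> Prop}
  (Esym : forall x y, E x y -> E y x)
  (Etr : forall x y z, E x y -> E y z -> E x z) {l : seq G} {S : G -> Prop} :
  (forall x, x \in l -> S x) -> (forall x, S x -> exists2 y, y \in l & E x y) ->
  exists2 n, nclasses S E n & (n <= size l)%N.
Proof.
elim: l S => [|c l IH] S lS cov.
  by exists 0%N => //; exists [::]; split=> // x /cov [y].
have lS_tail x : x \in l -> S x by move=> xl; apply: lS; rewrite in_cons xl orbT.
case: (classic (exists2 y, y \in l & E c y)) => [[y yl Ecy]|c_new].
  (* c is redundant: its class is already met by l *)
  have [|n nc le] := IH S lS_tail; last by exists n => //; apply: leqW.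
  move=> x /cov [z]; rewrite in_cons => /orP [/eqP -> Exc|zl Exz].
    by exists y => //; apply: Etr Exc Ecy.
  by exists z.
(* c is new: classify the complement of its class with l, then add c *)
pose S' x := S x /\ ~ E x c.
have [||n [r [sr rS' r_distinct r_cov]] le] := IH S'.
- by move=> x xl; split; [apply: lS_tail | move=> /Esym Ecx; apply: c_new; exists x].
- move=> x [Sx nExc]; have [y] := cov x Sx.
  by rewrite in_cons => /orP [/eqP ->|yl Exy] //; exists y.
exists n.+1 => //; exists (c :: r); split => //=; first by rewrite sr.
- move=> x; rewrite in_cons => /orP [/eqP ->|/rS' [] //].
  by apply: lS; rewrite mem_head.
- have r_out i : (i < n)%N -> ~ E (nth 1 r i) c.
    by move=> ilt; case: (rS' (nth 1 r i)); rewrite // mem_nth ?sr.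
  move=> [|i] [|j] //= ilt jlt.
  + by move=> /Esym /(r_out j jlt) [].
  + by move=> /(r_out i ilt) [].
  + by move=> /r_distinct -> //.
- move=> x Sx; have [Exc|nExc] := classic (E x c).
    by exists c => //; rewrite mem_head.
  have [y yr Exy] := r_cov x (conj Sx nExc).
  by exists y => //; rewrite in_cons yr orbT.
Qed.

Lemma coarser_nclasses {G : groupType} {E F : G -> G -> Prop} {S : G -> Prop}
  {n : nat} (Fsym : forall x y, F x y -> F y x)
  (Ftr : forall x y z, F x y -> F y z -> F x z)
  (EF : forall x y, E x y -> F x y) :
  nclasses S E n -> exists m, nclasses S F m.
Proof.
move=> [l [_ lS _ lcov]].
have [|m Fm _] := cover_nclasses Fsym Ftr lS; last by exists m.
by move=> x /lcov [y yl /EF]; exists y.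
Qed.

Section TwistedConjugacy.
Variables (G : groupType) (B : G -> Prop) (phi : G -> G).
Hypotheses (sgB : is_subgroup B) (homphi : hom_on B phi).

Let B_1 : B 1. Proof. by case: sgB. Qed.
Let BM {x y} : B x -> B y -> B (x * y). Proof. by case: sgB => _ BM _; apply: BM. Qed.
Let BV {x} : B x -> B x^-1. Proof. by case: sgB => _ _; apply. Qed.

Lemma hom_on1 : phi 1 = 1.
Proof.
have := homphi B_1 B_1; rewrite mul1g => E.
by apply: (mulgI (phi 1)); rewrite mulg1 -E.
Qed.

Lemma hom_onV g : B g -> phi g^-1 = (phi g)^-1.
Proof.
move=> Bg; have := homphi Bg (BV Bg); rewrite mulgV hom_on1 => E.
by apply/esym/mulg1_eq; rewrite -E.
Qed.

(* On a subgroup of B, the Reidemeister relation with phi(g)^-1 in place of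
   phi(g^-1), which is the form used in all computations below. *)
Lemma reid_relE {L : G -> Prop} {a b : G} : set_le L B ->
  reid_rel L phi a b <-> exists2 g, L g & a = g * b * (phi g)^-1.
Proof.
move=> LB; split=> [[g Lg E]|[g Lg E]]; exists g => //.
  by rewrite -hom_onV //; apply: LB.
by rewrite hom_onV //; apply: LB.
Qed.

Lemma reid_sym (L : G -> Prop) a b : is_subgroup L -> set_le L B ->
  reid_rel L phi a b -> reid_rel L phi b a.
Proof.
move=> [_ _ LV] LB /(reid_relE LB) [g Lg ->].
apply/(reid_relE LB); exists g^-1; first exact: LV.
rewrite hom_onV; last exact: LB.
by rewrite invgK -!mulgA mulKg mulVg mulg1.
Qed.

Lemma reid_trans (L : G -> Prop) a b c : is_subgroup L -> set_le L B ->
  reid_rel L phi a b -> reid_rel L phi b c -> reid_rel L phi a c.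
Proof.
move=> [_ LM _] LB /(reid_relE LB) [g Lg ->] /(reid_relE LB) [h Lh ->].
apply/(reid_relE LB); exists (g * h); first exact: LM.
rewrite homphi; try exact: LB.
by rewrite invgM !mulgA.
Qed.

Variable N : G -> Prop.
Hypotheses (sgN : is_subgroup N) (nN : is_normal_in N (fun _ => True)).

Let NM {x y} : N x -> N y -> N (x * y). Proof. by case: sgN => _ NM _; apply: NM. Qed.
Let NV {x} : N x -> N x^-1. Proof. by case: sgN => _ _; apply. Qed.

Lemma normal_conj k n : N n -> N (k * n * k^-1).
Proof. by case: nN => _ nNc Nn; have := nNc k^-1 n I Nn; rewrite invgK. Qed.

Lemma bar_sym a b : bar_reid_rel B N phi a b -> bar_reid_rel B N phi b a.
Proof.
move=> [g Bg Nab]; exists g^-1; first exact: BV.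
have := normal_conj (phi g)^-1 (NV Nab).
by rewrite /same_coset hom_onV // !invgM !invgK !mulgA mulVg mul1g.
Qed.

Lemma bar_trans a b c : bar_reid_rel B N phi a b ->
  bar_reid_rel B N phi b c -> bar_reid_rel B N phi a c.
Proof.
move=> [g Bg Nab] [h Bh Nbc]; exists (g * h); first exact: BM.
have := NM Nab (normal_conj (phi g) Nbc).
by rewrite /same_coset homphi // !invgM !mulgA mulgVK mulgK.
Qed.

Lemma reid_bar a b : reid_rel B phi a b -> bar_reid_rel B N phi a b.
Proof.
move=> /(reid_relE (fun _ h => h)) [g Bg E]; exists g => //.
by rewrite /same_coset -E mulVg; case: sgN.
Qed.

End TwistedConjugacy.

Section RestrictionToA2.
Variables (G : groupType) (B1 A1 A2 : G -> Prop) (phi : G -> G).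
Hypotheses (sgB1 : is_subgroup B1) (sgA1 : is_subgroup A1) (sgA2 : is_subgroup A2).
Hypotheses (nA1 : is_normal_in A1 B1) (nA2 : is_normal_in A2 (fun _ => True)).
Hypotheses (A1E : forall x, A1 x <-> (B1 x /\ A2 x)) (homphi : hom_on B1 phi).

Let A1B1 : set_le A1 B1. Proof. by move=> x /A1E []. Qed.
Let B1M {x y} : B1 x -> B1 y -> B1 (x * y). Proof. by case: sgB1 => _ BM _; apply: BM. Qed.
Let B1V {x} : B1 x -> B1 x^-1. Proof. by case: sgB1 => _ _; apply. Qed.
Let A2conj k {n} : A2 n -> A2 (k * n * k^-1). Proof. exact: (normal_conj nA2 k). Qed.
Let A2M {x y} : A2 x -> A2 y -> A2 (x * y). Proof. by case: sgA2 => _ AM _; apply: AM. Qed.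
Let A2V {x} : A2 x -> A2 x^-1. Proof. by case: sgA2 => _ _; apply. Qed.
Let reidB1E {a b} : reid_rel B1 phi a b <-> exists2 g, B1 g & a = g * b * (phi g)^-1.
Proof. exact: (reid_relE sgB1 homphi (L := B1)). Qed.
Let symB1 {a b} : reid_rel B1 phi a b -> reid_rel B1 phi b a.
Proof. exact: (reid_sym sgB1 homphi (L := B1) sgB1). Qed.
Let transB1 {a b c} : reid_rel B1 phi a b -> reid_rel B1 phi b c -> reid_rel B1 phi a c.
Proof. exact: (reid_trans sgB1 homphi (L := B1) sgB1). Qed.
Let symA1 {a b} : reid_rel A1 phi a b -> reid_rel A1 phi b a.
Proof. exact: (reid_sym sgB1 homphi sgA1 A1B1). Qed.
Let transA1 {a b c} : reid_rel A1 phi a b -> reid_rel A1 phi b c -> reid_rel A1 phi a c.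
Proof. exact: (reid_trans sgB1 homphi sgA1 A1B1). Qed.

Variable fl : seq G.
Hypotheses (flS : forall f, f \in fl -> fix_bar B1 A2 phi f)
  (flC : forall b, fix_bar B1 A2 phi b -> exists2 f, f \in fl & same_coset A2 b f).

Lemma fix_twist_A2 f ac : fix_bar B1 A2 phi f -> A2 ac -> A2 (f * ac * (phi f)^-1).
Proof.
move=> [_ fixf] Aac.
have -> : f * ac * (phi f)^-1 = (f * ac * f^-1) * (f * ((phi f)^-1 * f) * f^-1).
  by rewrite !mulgA mulgVK mulgK.
by apply: A2M; apply: A2conj.
Qed.

Lemma A2_class_fix_twists ac a : A2 ac -> A2 a -> reid_rel B1 phi a ac ->
  exists2 f, f \in fl & reid_rel A1 phi a (f * ac * (phi f)^-1).
Proof.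
move=> Aac Aa /reidB1E [h Bh Eh].
have fix_h : fix_bar B1 A2 phi h.
  split=> //; rewrite /same_coset.
  have : A2 (h * (phi h)^-1).
    have -> : h * (phi h)^-1 = a * (phi h * ac^-1 * (phi h)^-1).
      by rewrite Eh !mulgA mulgVK mulgK.
    by apply: A2M => //; apply: A2conj; apply: A2V.
  by move=> /(A2conj (phi h)^-1); rewrite invgK mulgA mulgVK.
have [f fl_f Ahf] := flC fix_h; have [Bf _] := flS fl_f.
pose u := f^-1 * h.
have Bu : B1 u by apply: B1M => //; apply: B1V.
have Au : A1 u by apply/A1E; split => //; have := A2V Ahf; rewrite invgM invgK.
have Afu : A1 (f * u * f^-1).
  by case: nA1 => _ /(_ f^-1 u); rewrite invgK; apply => //; apply: B1V.
exists f => //; apply/(reid_relE sgB1 homphi A1B1); exists (f * u * f^-1) => //.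
have Bf' := B1V Bf; have fu : f * u = h by rewrite /u mulVKg.
rewrite fu homphi // (hom_onV sgB1 homphi Bf) Eh.
by rewrite invgM invgK !mulgA !mulgVK.
Qed.

Lemma A2_part_of_class c : exists L : seq G, (forall y, y \in L -> A2 y) /\
  forall a, A2 a -> reid_rel B1 phi a c -> exists2 y, y \in L & reid_rel A1 phi a y.
Proof.
case: (classic (exists2 ac, A2 ac & reid_rel B1 phi ac c)) => [[ac Aac Rac]|no].
  exists [seq f * ac * (phi f)^-1 | f <- fl]; split.
    by move=> y /mapP [f /flS fix_f ->]; apply: fix_twist_A2.
  move=> a Aa Rac'; have [f fl_f Rf] := A2_class_fix_twists Aac Aa
    (transB1 Rac' (symB1 Rac)).
  by exists (f * ac * (phi f)^-1) => //; apply/mapP; exists f.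
by exists [::]; split => // a Aa Rac; case: no; exists a.
Qed.

Lemma restriction_finite_classes :
  (exists n, nclasses (fun _ => True) (reid_rel B1 phi) n) ->
  exists n, nclasses A2 (reid_rel A1 phi) n.
Proof.
move=> [n [l [_ _ _ lcov]]].
have [L [LA2 Lcov]] : exists L : seq G, (forall y, y \in L -> A2 y) /\
    forall a, A2 a -> (exists2 c, c \in l & reid_rel B1 phi a c) ->
      exists2 y, y \in L & reid_rel A1 phi a y.
  elim: l {lcov} => [|c l [L [LA2 Lcov]]]; first by exists [::]; split => // a _ [].
  have [Lc [LcA2 Lccov]] := A2_part_of_class c.
  exists (Lc ++ L); split=> [y|a Aa [c']].
    by rewrite mem_cat => /orP [/LcA2|/LA2].
  rewrite in_cons => /orP [/eqP -> /(Lccov _ Aa) [y yLc Ry]|c'l Rac'].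
    by exists y => //; rewrite mem_cat yLc.
  have [y yL Ry] := Lcov a Aa (ex_intro2 _ _ c' c'l Rac').
  by exists y => //; rewrite mem_cat yL orbT.
have [|m ncl _] := cover_nclasses (@symA1) (@transA1) LA2; last by exists m.
by move=> a Aa; apply: Lcov => //; apply: lcov.
Qed.

End RestrictionToA2.

Lemma central_product_cover (G : groupType) (B1 A1 A2 : G -> Prop) (phi : G -> G)
  (sgB1 : is_subgroup B1) (sgA2 : is_subgroup A2) (A1sub : set_le A1 A2)
  (A1B1 : set_le A1 B1) (homphi : hom_on B1 phi)
  (cen : forall a, A2 a -> central a) (l t : seq G)
  (lcov : forall x, exists2 c, c \in l & bar_reid_rel B1 A2 phi x c)
  (tcov : forall u, A2 u -> exists2 a, a \in t & reid_rel A1 phi u a) :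
  forall x, exists2 y, y \in [seq c * a | c <- l, a <- t] & reid_rel B1 phi x y.
Proof.
move=> x; have [c cl [g Bg Au']] := lcov x.
pose u := (g * c * (phi g)^-1)^-1 * x.
have Au : A2 u.
  by rewrite /u -[x in _ * x]invgK -invgM; case: sgA2 => _ _; apply.
have [a at0 /(reid_relE sgB1 homphi A1B1) [h Ah Eu]] := tcov u Au.
exists (c * a); first exact: allpairs_f.
have Bh := A1B1 _ Ah.
apply/(reid_relE sgB1 homphi (L := B1)) => //; exists (g * h).
  by case: sgB1 => _ B1M _; apply: B1M.
have xE : x = g * c * (phi g)^-1 * u by rewrite /u mulVKg.
rewrite {1}xE homphi // invgM -(mulgA _ _ u) -(cen u Au) Eu !mulgA.
by rewrite -(mulgA g c h) -(cen h (A1sub _ Ah) c) !mulgA.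
Qed.

Theorem mainTheorem7 (G : groupType) (B1 A1 A2 : G -> Prop) (phi : G -> G)
  (sgB1 : is_subgroup B1) (sgA1 : is_subgroup A1) (sgA2 : is_subgroup A2)
  (A1subA2 : set_le A1 A2)
  (fiA : finite_index A1 A2) (fiB : finite_index B1 (fun _ => True))
  (nA1 : is_normal_in A1 B1) (nA2 : is_normal_in A2 (fun _ => True))
  (A1E : forall x, A1 x <-> (B1 x /\ A2 x))
  (homphi : hom_on B1 phi)
  (phiA1 : forall x, A1 x -> A2 (phi x)) :
  (infinite_classes (fun _ => True) (bar_reid_rel B1 A2 phi) ->
     infinite_classes (fun _ => True) (reid_rel B1 phi))
  /\
  ((exists n, nclasses (fun _ => True) (bar_reid_rel B1 A2 phi) n) ->
   (exists m, nclasses (fix_bar B1 A2 phi) (same_coset A2) m) ->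
   infinite_classes A2 (reid_rel A1 phi) ->
     infinite_classes (fun _ => True) (reid_rel B1 phi))
  /\
  ((forall a, A2 a -> central a) ->
   forall m k, nclasses (fun _ => True) (bar_reid_rel B1 A2 phi) m ->
     nclasses A2 (reid_rel A1 phi) k ->
     exists2 n, nclasses (fun _ => True) (reid_rel B1 phi) n & (n <= m * k)%N).
Proof.
have A1B1 : set_le A1 B1 by move=> x /A1E [].
split; [|split].
- move=> bar_inf [n Rn]; apply: bar_inf.
  apply: (coarser_nclasses _ _ _ Rn) => [x y|x y z|x y].
  + exact: bar_sym.
  + exact: bar_trans.
  + exact: reid_bar.
- move=> _ [_ [fl [_ flS _ flC]]] res_inf fin; apply: res_inf.
  exact: restriction_finite_classes flS flC fin.
- move=> cen m k [l [sl _ _ lcov]] [t [st _ _ tcov]].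
  have symB x y : reid_rel B1 phi x y -> reid_rel B1 phi y x.
    exact: (reid_sym sgB1 homphi sgB1).
  have transB x y z : reid_rel B1 phi x y -> reid_rel B1 phi y z -> reid_rel B1 phi x z.
    exact: (reid_trans sgB1 homphi sgB1).
  have [|n ncl le] := cover_nclasses symB transB
    (l := [seq c * a | c <- l, a <- t]) (S := fun _ => True) (fun _ _ => I).
    move=> x _; exact: (central_product_cover sgB1 sgA2 A1subA2 A1B1 homphi cen
      (fun x => lcov x I) tcov).
  by exists n => //; rewrite (leq_trans le) // size_allpairs sl st.
Qed.
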